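(* Let $M_1=(E,r_1)$ and $M_2=(E,r_2)$ be demi-matroids. Then $\mathcal{E}_{M_1}\subseteq\mathcal{E}_{M_2}\iff \mathcal{E}_{M_2^*}\subseteq\mathcal{E}_{M_1^*}\iff \mathcal{E}_{\overline{M_1}}\subseteq\mathcal{E}_{\overline{M_2}}.$
   Context: A demi-matroid is a pair $(E,r)$ with $E$ finite and $r:2^E\to\mathbb{N}$ satisfying $r(\emptyset)=0$ and $r(X)\le r(X\cup\{x\})\le r(X)+1$ for all $X\subseteq E$, $x\in E$. For a demi-matroid $M=(E,r)$: its (first) dual is $M^*=(E,r^* )$ with $r^*(X)=|X|+r(E\setminus X)-r(E)$; its supplement (second) dual is $\overline{M}=(E,\overline{r})$ with $\overline{r}(X)=r(E)-r(E\setminus X)$; both are demi-matroids. Also $\mathcal{E}_M=\{(X,x): X\subseteq E,\ x\in X,\ r(X\setminus\{x\})=r(X)\}$. *)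

From mathcomp Require Import all_boot.
Set Implicit Arguments.
Unset Strict Implicit.
Unset Printing Implicit Defensive.

(* A demi-matroid on a finite ground set E is given by a rank function
   r : {set E} -> nat (the ground set is the whole finType E). *)
Definition demi_matroid (E : finType) (r : {set E} -> nat) : Prop :=
  r set0 = 0 /\
  forall (X : {set E}) (x : E), r X <= r (x |: X) <= (r X).+1.

(* first dual: r*(X) = |X| + r(E \ X) - r(E)  (nonnegative for demi-matroids) *)
Definition dual_rank (E : finType) (r : {set E} -> nat) : {set E} -> nat :=
  fun X => #|X| + r (~: X) - r setT.

Definition supp_rank (E : finType) (r : {set E} -> nat) : {set E} -> nat :=
  fun X => r setT - r (~: X).

Definition inE_M (E : finType) (r : {set E} -> nat) (X : {set E}) (x : E) : Prop :=
  x \in X /\ r (X :\ x) = r X.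

Definition E_subset (E : finType) (r1 r2 : {set E} -> nat) : Prop :=
  forall (X : {set E}) (x : E), inE_M r1 X x -> inE_M r2 X x.

(* Write Y := x |: ~: X for x \in X.  The map (X, x) |-> (Y, x) is an involution
   on pairs with x \in X, and both duals read membership of (X, x) off the
   single rank jump r Y - r (~: X) \in {0, 1} of the original rank function:
   (X, x) lies in E of the supplement dual iff (Y, x) lies in E_M, and in E of
   the first dual iff it does not.  Hence the supplement dual transports the
   inclusion E_M1 \subset E_M2 along the involution, while the first dual
   transports its contrapositive, which reverses it. *)

From mathcomp Require Import all_boot.
From mathcomp Require Import zify.

Set Implicit Arguments.
Unset Strict Implicit.
Unset Printing Implicit Defensive.

Lemma inE_MP (E : finType) (r : {set E} -> nat) (X : {set E}) (x : E) :
  reflect (inE_M r X x) ((x \in X) && (r (X :\ x) == r X)).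
Proof. by apply: (iffP andP) => -[xX /eqP]. Qed.

Lemma setCD1 (E : finType) (X : {set E}) (x : E) : ~: (X :\ x) = x |: ~: X.
Proof. by apply/setP => y; rewrite !inE negb_and negbK. Qed.

Lemma setU1CK (E : finType) (X : {set E}) (x : E) :
  x \in X -> x |: ~: (x |: ~: X) = X.
Proof. by move=> xX; rewrite -(setCD1 X x) setCK setD1K. Qed.

Lemma inE_M_setU1C (E : finType) (r : {set E} -> nat) (X : {set E}) (x : E) :
  x \in X -> inE_M r (x |: ~: X) x <-> r (x |: ~: X) = r (~: X).
Proof.
move=> xX; have xCX : x \notin ~: X by rewrite inE negbK.
by rewrite /inE_M setU1K // setU11; split=> [[_ <-] | ->].
Qed.

Lemma E_subset_setU1C (E : finType) (r1 r2 : {set E} -> nat) :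
  E_subset r1 r2 <->
  forall (X : {set E}) x, x \in X -> inE_M r1 (x |: ~: X) x -> inE_M r2 (x |: ~: X) x.
Proof.
split=> [sub12 X x _ | sub12 X x [xX eq1]]; first exact: sub12.
by rewrite -(setU1CK xX); apply: sub12; rewrite ?setU11 // setU1CK.
Qed.

Section DemiMatroid.
Variables (E : finType) (r : {set E} -> nat).
Hypothesis r_demi : demi_matroid r.

Lemma rank_setU1 X x : r X <= r (x |: X) <= (r X).+1.
Proof. exact: r_demi.2. Qed.

Lemma rank_setU_seq (A : {set E}) (s : seq E) :
  r A <= r (A :|: [set x in s]) <= r A + size s.
Proof.
elim: s => [|y s IHs] /=.
  by rewrite addn0 (_ : [set x in [::]] = set0) ?setU0 ?leqnn //; apply/setP => x.
have -> : A :|: [set x in y :: s] = y |: (A :|: [set x in s]).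
  by apply/setP => x; rewrite !inE orbCA.
by move: IHs (rank_setU1 (A :|: [set x in s]) y); lia.
Qed.

Lemma rank_subset (A B : {set E}) : A \subset B -> r A <= r B <= r A + #|B :\: A|.
Proof.
move=> sAB; have defB : A :|: (B :\: A) = B.
  by rewrite -[RHS](setID B A) (setIidPr sAB).
by rewrite -[in r B]defB -[X in r (_ :|: X)]set_enum cardE rank_setU_seq.
Qed.

Lemma rank_le_setT X : r X <= r setT.
Proof. by case/andP: (rank_subset (subsetT X)). Qed.

Lemma rank_setT_le X : r setT <= r (~: X) + #|X|.
Proof. by case/andP: (rank_subset (subsetT (~: X))); rewrite setTD setCK. Qed.

Lemma inE_supp_rank X x :
  inE_M (supp_rank r) X x <-> x \in X /\ inE_M r (x |: ~: X) x.
Proof.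
split=> -[xX eqX]; split=> //; move: eqX; rewrite inE_M_setU1C //.
all: rewrite /supp_rank setCD1.
all: by move: (rank_le_setT (x |: ~: X)) (rank_le_setT (~: X)); lia.
Qed.

Lemma inE_dual_rank X x :
  inE_M (dual_rank r) X x <-> x \in X /\ ~ inE_M r (x |: ~: X) x.
Proof.
split=> -[xX eqX]; split=> //; move: eqX; rewrite inE_M_setU1C //.
all: rewrite /dual_rank setCD1.
all: move: (cardsD1 x X) (rank_setT_le X) (rank_setT_le (X :\ x)).
all: by rewrite xX setCD1; move: (rank_setU1 (~: X) x); lia.
Qed.

End DemiMatroid.

Section TwoDemiMatroids.
Variables (E : finType) (r1 r2 : {set E} -> nat).
Hypotheses (r1_demi : demi_matroid r1) (r2_demi : demi_matroid r2).

Lemma E_subset_supp_rank :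
  E_subset r1 r2 <-> E_subset (supp_rank r1) (supp_rank r2).
Proof.
rewrite E_subset_setU1C; split=> sub12 X x.
- by rewrite (inE_supp_rank r1_demi) (inE_supp_rank r2_demi) => -[xX /(sub12 _ _ xX)].
- move=> xX in1; move: (sub12 X x).
  by rewrite (inE_supp_rank r1_demi) (inE_supp_rank r2_demi) => /(_ (conj xX in1))[].
Qed.

Lemma E_subset_dual_rank :
  E_subset r1 r2 <-> E_subset (dual_rank r2) (dual_rank r1).
Proof.
rewrite E_subset_setU1C; split=> sub12 X x.
- rewrite (inE_dual_rank r2_demi) (inE_dual_rank r1_demi) => -[xX not2].
  by split=> // in1; apply/not2/sub12.
- move=> xX in1; case: (inE_MP r2 (x |: ~: X) x) => // not2; move: (sub12 X x).
  rewrite (inE_dual_rank r2_demi) (inE_dual_rank r1_demi) => /(_ (conj xX not2)).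
  by case=> _ [].
Qed.

End TwoDemiMatroids.

Theorem mainTheorem6 (E : finType) (r1 r2 : {set E} -> nat) :
  demi_matroid r1 -> demi_matroid r2 ->
  (E_subset r1 r2 <-> E_subset (dual_rank r2) (dual_rank r1)) /\
  (E_subset (dual_rank r2) (dual_rank r1) <->
     E_subset (supp_rank r1) (supp_rank r2)).
Proof.
move=> r1_demi r2_demi.
have := E_subset_dual_rank r1_demi r2_demi.
have := E_subset_supp_rank r1_demi r2_demi.
tauto.
Qed.
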